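(* For every positive integer $r$, there exists a $2$-coverable connected binary matroid $M$ of rank $r$ such that in any rainbow circuit-free coloring of $M$ in which each color is used at most three times, the number of colors is at most $\lceil 6r/7\rceil$.
   Context: A coloring of the ground set is a partition into nonempty color classes; it is rainbow circuit-free if no circuit of $M$ has all its elements of pairwise different colors. A matroid is $k$-coverable if its ground set can be covered by at most $k$ independent sets. A matroid is connected if any two elements lie in a common circuit. A matroid is binary if it is representable over $GF(2)$. *)

(* Binary matroids are given as column (vector) matroids over GF(2):
   a family of vectors A : E -> 'rV['F_2]_m indexed by a finite ground set E. *)
From HB Require Import structures.
From mathcomp Require Import all_boot all_order all_algebra.
Set Implicit Arguments. Unset Strict Implicit. Unset Printing Implicit Defensive.
Import GRing.Theory.
Local Open Scope ring_scope.

Section BinaryMatroid.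
Variables (E : finType) (m : nat) (A : E -> 'rV['F_2]_m).

Definition mindep (S : {set E}) : Prop :=
  forall c : E -> 'F_2, \sum_(e in S) c e *: A e = 0 -> forall e, e \in S -> c e = 0.

Definition mcircuit (C : {set E}) : Prop :=
  ~ mindep C /\ forall e, e \in C -> mindep (C :\ e).

Definition mrank_is (r : nat) : Prop :=
  (exists B : {set E}, mindep B /\ #|B| = r) /\
  (forall S : {set E}, mindep S -> (#|S| <= r)%N).

Definition mcoverable (k : nat) : Prop :=
  exists I : seq {set E}, (size I <= k)%N /\ (forall S, S \in I -> mindep S) /\
    (forall e : E, exists2 S, S \in I & e \in S).

Definition mconnected : Prop :=
  forall x y : E, x != y -> exists C : {set E}, mcircuit C /\ x \in C /\ y \in C.

(* a coloring is a partition P of the ground set into nonempty color classes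
   (mathcomp's [partition] excludes the empty block); it is rainbow circuit-free
   if no circuit meets every color class in at most one element *)
Definition rainbow_circuit_free (P : {set {set E}}) : Prop :=
  forall C : {set E}, mcircuit C -> ~ (forall B, B \in P -> (#|C :&: B| <= 1)%N).

End BinaryMatroid.

From HB Require Import structures.
From mathcomp Require Import all_boot all_order all_algebra.
From mathcomp Require Import zify.
Set Implicit Arguments. Unset Strict Implicit. Unset Printing Implicit Defensive.
Import GRing.Theory.

(* Write r = 4k + t with 1 <= t <= 4 and take k disjoint copies of AG(3,2)
   (the eight odd-weight vectors of GF(2)^4, rank 4), t coloops, and one more
   element f, the sum of a fixed point of every copy and of all coloops.  This
   binary matroid has rank r, is covered by two independent sets, and f makes
   it connected.
   In a rainbow circuit-free colouring with classes of size at most 3, every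
   plane of a copy repeats a colour, and an exhaustive check shows that a copy
   then carries at most 3 colours.  The t + 1 remaining elements bring at most
   t + 1 further colours, and the circuit formed by f, the coloops and the
   fixed points also repeats a colour, which saves one.  Hence there are at
   most 3k + t <= (6r + 6) / 7 colours. *)

Section VectorMatroid.
Local Open Scope ring_scope.
Variables (E : finType) (m : nat) (A : E -> 'rV['F_2]_m).

(* A dependency [c] of [C :\ e] minus [c e0] times the all-ones dependency of
   [C] is a dependency of the independent set [C :\ e0]. *)
Lemma mcircuit_sum0 (C : {set E}) e0 :
  \sum_(e in C) A e = 0 -> e0 \in C -> mindep A (C :\ e0) -> mcircuit A C.
Proof.
move=> sumC0 e0C indepC0; split.
  move=> /(_ (fun=> 1)); under eq_bigr do rewrite scale1r.
  by move=> /(_ sumC0 e0 e0C)/eqP; rewrite oner_eq0.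
move=> e eC c sumc0 e' e'C.
have [eq_e_e0|ne_e_e0] := eqVneq e e0.
  by subst e; exact: indepC0 c sumc0 e' e'C.
pose d x := (if x == e then 0 else c x) - c e0.
have sumd0 : \sum_(x in C :\ e0) d x *: A x = 0.
  have : \sum_(x in C) d x *: A x = 0.
    under eq_bigr do rewrite scalerBl.
    rewrite sumrB -scaler_sumr sumC0 scaler0 subr0 (big_setD1 e eC) /= eqxx.
    by rewrite scale0r add0r -{2}sumc0; apply: eq_bigr => x /setD1P[/negbTE->].
  by rewrite (big_setD1 e0 e0C) /d /= eq_sym (negbTE ne_e_e0) subrr scale0r add0r.
have ce0 : c e0 = 0.
  have := indepC0 d sumd0 e; rewrite !inE eC ne_e_e0 /d eqxx sub0r => /(_ isT).
  by move/eqP; rewrite oppr_eq0 => /eqP.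
have [-> //|ne_e'_e0] := eqVneq e' e0.
move: e'C; rewrite !inE => /andP[ne_e'_e e'C].
have := indepC0 d sumd0 e'; rewrite !inE ne_e'_e0 e'C /d (negbTE ne_e'_e) ce0.
by rewrite subr0 => /(_ isT).
Qed.

(* The [2 ^ #|S|] subset sums of an independent [S] are pairwise distinct. *)
Lemma mindep_card (S : {set E}) : mindep A S -> (#|S| <= m)%N.
Proof.
move=> indepS; pose sumA (T : {set E}) := \sum_(e in T) A e.
have sum_ind (T : {set E}) : T \subset S -> \sum_(e in S) (e \in T)%:R *: A e = sumA T.
  move=> sTS; rewrite /sumA (big_setID T) /= (setIidPr sTS).
  rewrite [X in _ + X]big1 ?addr0 => [|e /setDP[_ /negbTE->]]; last by rewrite scale0r.
  by apply: eq_bigr => e ->; rewrite scale1r.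
have inj_sumA : {in powerset S &, injective sumA}.
  move=> T T'; rewrite !inE => sTS sT'S eqT; apply/setP => e.
  pose c e := (e \in T)%:R - (e \in T')%:R : 'F_2.
  have sumc0 : \sum_(e in S) c e *: A e = 0.
    under eq_bigr do rewrite scalerBl.
    by rewrite sumrB !sum_ind // eqT subrr.
  have [eS|eNS] := boolP (e \in S); last first.
    by rewrite (contraNF (subsetP sTS e)) // (contraNF (subsetP sT'S e)).
  move: (indepS c sumc0 e eS); rewrite /c => /eqP; rewrite subr_eq0.
  by case: (e \in T); case: (e \in T') => //= /eqP; rewrite ?oner_eq0 // eq_sym oner_eq0.
have := max_card (sumA @: powerset S).
rewrite card_in_imset // card_powerset card_mx card_Fp // mul1n.
by rewrite leq_exp2l.
Qed.

Lemma rainbow_circuit_free_pblock (P : {set {set E}}) (C : {set E}) :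
  partition P [set: E] -> rainbow_circuit_free A P -> mcircuit A C ->
  exists u v, [/\ u \in C, v \in C, u != v & pblock P u = pblock P v].
Proof.
move=> partP rfP circC.
have [B /andP[BP CB2]|] := pickP [pred B | (B \in P) && (1 < #|C :&: B|)%N].
  have [u [v [/setIP[uC uB] /setIP[vC vB] neq_uv]]] := card_gt1P CB2.
  have tiP := partition_trivIset partP.
  by exists u, v; rewrite !(def_pblock tiP BP).
move=> noB; case: (rfP C circC) => B BP.
by move: (noB B); rewrite /= BP /= => /negbT; rewrite -leqNgt.
Qed.

End VectorMatroid.

Section BitRows.
Local Open Scope ring_scope.
Variables (E : finType) (m : nat) (b : E -> nat -> bool).

Definition bitrow (e : E) : 'rV['F_2]_m := \row_(j < m) (b e j)%:R.

(* By induction on [rk]: in the pivot column of [e], every other element of [S]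
   with a nonzero entry has a smaller [rk], hence a zero coefficient. *)
Lemma mindep_bitrow (S : {set E}) (piv rk : E -> nat) :
  (forall e, e \in S -> (piv e < m)%N /\ b e (piv e)) ->
  (forall e e', e \in S -> e' \in S -> e' != e -> b e' (piv e) -> (rk e' < rk e)%N) ->
  mindep bitrow S.
Proof.
move=> pivP rkP c sumc0.
suff c0 N e : e \in S -> (rk e < N)%N -> c e = 0 by move=> e eS; exact: (c0 (rk e).+1).
elim: N e => [//|N IHN] e eS lt_rk_N.
have [lt_piv_m be] := pivP e eS.
move/(congr1 (fun v : 'rV_m => v 0 (Ordinal lt_piv_m))): sumc0.
rewrite summxE mxE (big_setD1 e eS) /= !mxE be mulr1 big1 ?addr0 //.
move=> e' /setD1P[ne_e'_e e'S]; rewrite !mxE /=.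
case be': (b e' (piv e)); last by rewrite mulr0.
by rewrite IHN ?mul0r // (leq_trans (rkP e e' eS e'S ne_e'_e be')).
Qed.

Lemma sum_bitrow_eq0 (C : {set E}) :
  (forall j : 'I_m, ~~ odd #|[set e in C | b e j]|) -> \sum_(e in C) bitrow e = 0.
Proof.
move=> evenC; apply/rowP => j; rewrite summxE !mxE.
have -> : \sum_(e in C) bitrow e 0 j = (#|[set e in C | b e j]|)%:R.
  rewrite -sum1_card big_mkcond /= natr_sum [RHS]big_mkcond /=.
  by apply: eq_bigr => e _; rewrite !inE mxE; case: (e \in C); case: (b e j).
by rewrite -Fp_nat_mod // modn2 (negbTE (evenC j)).
Qed.
End BitRows.

Section CardBigcup.
Variables (I T : finType) (F : I -> {set T}).

Lemma leq_card_bigcup (P : pred I) :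
  (#|\bigcup_(i | P i) F i| <= \sum_(i | P i) #|F i|)%N.
Proof.
elim/big_rec2: _ => [|i n U _ leUn]; first by rewrite cards0.
by rewrite (leq_trans (leq_card_setU _ _).1) ?leq_add2l.
Qed.

Lemma ltn_card_bigcup g h :
  g != h -> F g :&: F h != set0 -> (#|\bigcup_i F i| < \sum_i #|F i|)%N.
Proof.
move=> ne_gh meet_gh; rewrite (bigD1 g) //= [X in (_ < X)%N](bigD1 g) //= cardsU.
have meet_rest : (0 < #|F g :&: \bigcup_(i | i != g) F i|)%N.
  case/set0Pn: meet_gh => x /setIP[xg xh]; apply/card_gt0P; exists x.
  by rewrite inE xg; apply/bigcupP; exists h; rewrite // eq_sym.
have := leq_card_bigcup (fun i => i != g).
have := subset_leq_card (subsetIl (F g) (\bigcup_(i | i != g) F i)).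
lia.
Qed.

End CardBigcup.

Lemma partition_pblock_imset (T : finType) (P : {set {set T}}) :
  partition P [set: T] -> P = pblock P @: [set: T].
Proof.
move=> partP; have tiP := partition_trivIset partP.
apply/setP => B; apply/idP/imsetP => [BP|[x _ ->]].
  have /set0Pn[x xB] := partition_neq0 partP BP.
  by exists x; rewrite // (def_pblock tiP BP xB).
by apply: pblock_mem; rewrite (cover_partition partP).
Qed.

Lemma card_ord_pred n (p : pred nat) : #|[set i : 'I_n | p i]| = count p (iota 0 n).
Proof.
rewrite cardsE cardE /enum_mem size_filter -enumT /= -val_enum_ord count_map.
exact: eq_count.
Qed.

Lemma count_iota_mod d n (p : pred nat) :
  count (fun i => p (i %% d)) (iota 0 (d * n)) = n * count p (iota 0 d).
Proof.
elim: n => [|n IHn]; first by rewrite muln0.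
rewrite mulnSr iotaD count_cat IHn add0n mulSn addnC.
have -> : iota (d * n) d = map (addn (d * n)) (iota 0 d) by rewrite -iotaDl addn0.
rewrite count_map; congr (_ + _); apply: eq_in_count => x; rewrite mem_iota => /andP[_ lt_x].
by rewrite /= mulnC modnMDl modn_small.
Qed.

Lemma imset_setD1_collision (aT rT : finType) (f : aT -> rT) (A : {set aT}) u v :
  v \in A -> v != u -> f u = f v -> f @: A = f @: (A :\ u).
Proof.
move=> vA ne_vu fuv; apply/eqP; rewrite eqEsubset [X in _ && X]imsetS ?subsetDl // andbT.
apply/subsetP => _ /imsetP[x xA ->]; have [->|ne_xu] := eqVneq x u.
  by rewrite fuv imset_f // !inE ne_vu.
by rewrite imset_f // !inE ne_xu.
Qed.

(* The points of AG(3,2) are the eight odd-weight vectors of GF(2)^4, coded as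
   4-bit integers; points 0..3 are the unit vectors. *)
Definition ag_code := [:: 1; 2; 4; 8; 7; 11; 13; 14].
Definition ag_bit (x j : nat) : bool := odd (nth 0 ag_code x %/ 2 ^ j).

Definition bit_parity (s : seq nat) (j : nat) : bool :=
  odd (count (fun x => (x \in s) && ag_bit x j) (iota 0 8)).

(* A pivoted list [(x, j)] lists points [x] with a pivot bit [j] of [x] that no
   later point of the list has: a certificate of linear independence. *)
Definition pivot_of (l : seq (nat * nat)) (x : nat) : nat :=
  nth 0 (unzip2 l) (index x (unzip1 l)).

Definition pivoted (l : seq (nat * nat)) : bool :=
  all (fun x => [&& x < 8, pivot_of l x < 4, ag_bit x (pivot_of l x) &
    all (fun y => [|| y == x, ~~ ag_bit y (pivot_of l x)
                    | index y (unzip1 l) < index x (unzip1 l)]) (unzip1 l)])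
  (unzip1 l).

Lemma pivotedP (l : seq (nat * nat)) x : pivoted l -> x \in unzip1 l ->
  [/\ x < 8, pivot_of l x < 4, ag_bit x (pivot_of l x) &
      forall y, y \in unzip1 l -> y != x -> ag_bit y (pivot_of l x) ->
        index y (unzip1 l) < index x (unzip1 l)].
Proof.
move=> /allP/[apply]/and4P[lt_x8 lt_piv4 bit_x /allP later]; split=> // y /later.
by case/or3P=> [->|/negbTE->|].
Qed.

(* The 14 planes of AG(3,2), each given by one point and a pivoted list of
   the three others. *)
Definition ag_planes : seq (nat * seq (nat * nat)) :=
 [:: (0, [:: (4,0); (1,1); (2,2)]); (0, [:: (5,0); (1,1); (3,3)]);
     (0, [:: (6,0); (7,2); (1,1)]); (0, [:: (6,0); (2,2); (3,3)]);
     (0, [:: (5,0); (7,1); (2,2)]); (0, [:: (4,0); (7,1); (3,3)]);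
     (4, [:: (5,1); (6,2); (0,0)]); (1, [:: (7,1); (2,2); (3,3)]);
     (1, [:: (5,1); (6,0); (2,2)]); (1, [:: (4,1); (6,0); (3,3)]);
     (4, [:: (5,0); (7,2); (1,1)]); (2, [:: (4,2); (5,0); (3,3)]);
     (4, [:: (6,0); (7,1); (2,2)]); (5, [:: (6,0); (7,1); (3,3)])].

Definition plane_pts (pl : nat * seq (nat * nat)) : seq nat := pl.1 :: unzip1 pl.2.

Definition plane_ok (pl : nat * seq (nat * nat)) : bool :=
  [&& pivoted pl.2, pl.1 < 8, pl.1 \notin unzip1 pl.2 &
      all (fun j => ~~ bit_parity (plane_pts pl) j) (iota 0 4)].

Lemma ag_planes_ok : all plane_ok ag_planes. Proof. by []. Qed.

Definition ag_plane_through (a b : nat) :=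
  nth (0, [::]) ag_planes
      (find (fun pl => (a \in plane_pts pl) && (b \in plane_pts pl)) ag_planes).

Lemma ag_plane_throughP (a b : 'I_8) :
  let pl := ag_plane_through a b in
  pl \in ag_planes /\ (a : nat) \in plane_pts pl /\ (b : nat) \in plane_pts pl.
Proof.
have has_ab : has (fun pl => ((a : nat) \in plane_pts pl) && ((b : nat) \in plane_pts pl))
    ag_planes.
  by case: a b => [[|[|[|[|[|[|[|[|//]]]]]]]] ?] [[|[|[|[|[|[|[|[|//]]]]]]]] ?].
have /andP[aP bP] := nth_find (0, [::]) has_ab.
by split; [apply/mem_nth; rewrite -has_find | split].
Qed.

(* A pivoted list through the point [s] whose points sum to point 0. *)
Definition ag_to_base (s : nat) : seq (nat * nat) :=
  match s with
  | 0 => [:: (0,0)]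
  | 1 | 2 | 4 => [:: (4,0); (1,1); (2,2)]
  | 3 | 5 => [:: (5,0); (1,1); (3,3)]
  | _ => [:: (6,0); (7,2); (1,1)]
  end.

Lemma ag_to_base_ok :
  all (fun s => [&& pivoted (ag_to_base s), s \in unzip1 (ag_to_base s) &
                    all (fun j => bit_parity (unzip1 (ag_to_base s)) j == (j == 0)) (iota 0 4)])
      (iota 0 8).
Proof. by []. Qed.

Definition ag_unit_basis : seq (nat * nat) := [:: (0,0); (1,1); (2,2); (3,3)].
Definition ag_basis1 : seq (nat * nat) := [:: (4,2); (5,3); (0,0); (1,1)].
Definition ag_basis2 : seq (nat * nat) := [:: (6,0); (7,1); (2,2); (3,3)].

Lemma ag_bases_ok :
  [&& pivoted ag_unit_basis, pivoted ag_basis1, pivoted ag_basis2 &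
      all (fun x => (x \in unzip1 ag_basis1) || (x \in unzip1 ag_basis2)) (iota 0 8)].
Proof. by []. Qed.

Fixpoint bounded_seqs (n : nat) : seq (seq nat) :=
  if n is n'.+1 then flatten [seq [seq rcons l v | v <- iota 0 n] | l <- bounded_seqs n']
  else [:: [::]].

Lemma bounded_seqsP n (l : seq nat) :
  size l = n -> (forall j, j < n -> nth 0 l j <= j) -> l \in bounded_seqs n.
Proof.
elim: n l => [|n IHn] l; first by move/eqP/nilP->.
case/lastP: l => [//|l v]; rewrite size_rcons => -[size_l] le_l.
apply/flattenP; exists [seq rcons l v | v <- iota 0 n.+1].
  apply/mapP; exists l => //; apply: IHn => // j lt_jn.
  by have := le_l j (ltnW lt_jn); rewrite nth_rcons size_l lt_jn.
apply/mapP; exists v => //; rewrite mem_iota add0n.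
by have := le_l n (ltnSn n); rewrite nth_rcons size_l ltnn eqxx.
Qed.

Definition planes_non_rainbow (l : seq nat) : bool :=
  all (fun pl => has (fun a => has (fun b => (a != b) && (nth 0 l a == nth 0 l b))
                                  (plane_pts pl)) (plane_pts pl)) ag_planes.

Definition classes_le3 (l : seq nat) : bool :=
  all (fun v => count (fun x => nth 0 l x == v) (iota 0 8) <= 3) (iota 0 8).

Definition fixpoints_le3 (l : seq nat) : bool := count (fun x => nth 0 l x == x) (iota 0 8) <= 3.

(* Labelling each point by the least point of its colour class gives a sequence
   of [bounded_seqs 8] whose fixpoints count the colours, so this exhaustive
   search over the 8! sequences covers every colouring of AG(3,2). *)
Lemma bounded_seqs_colour_check :
  all (fun l => planes_non_rainbow l ==> classes_le3 l ==> fixpoints_le3 l) (bounded_seqs 8).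
Proof. by vm_compute. Qed.

Section AGColouring.
Variables (U : finType) (key : 'I_8 -> U).

Definition first_rep (x : 'I_8) : 'I_8 := [arg min_(y < x | key y == key x) val y].

Lemma first_repP x : key (first_rep x) = key x /\ forall y, key y = key x -> first_rep x <= y.
Proof.
rewrite /first_rep; case: arg_minnP => [|y /eqP key_y min_y]; first exact: eqxx.
by split => // z /eqP; apply: min_y.
Qed.

Lemma eq_first_rep x y : (first_rep x == first_rep y) = (key x == key y).
Proof.
have [key_x min_x] := first_repP x; have [key_y min_y] := first_repP y.
apply/eqP/eqP => [eq_rep|key_xy]; first by rewrite -key_x -key_y eq_rep.
by apply/val_inj/eqP; rewrite eqn_leq min_x ?min_y ?key_x ?key_y.
Qed.

Lemma card_colours_eq_reps : #|key @: setT| = #|[set x | first_rep x == x]|.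
Proof.
rewrite -(card_in_imset (f := key)); last first.
  move=> x y; rewrite !inE => /eqP rep_x /eqP rep_y /eqP.
  by rewrite -eq_first_rep rep_x rep_y => /eqP.
apply: eq_card => u; apply/imsetP/imsetP => -[x _ ->]; last by exists x.
have [key_x _] := first_repP x; exists (first_rep x) => //.
by rewrite inE eq_first_rep key_x.
Qed.

Lemma card_colours_AG_le3 :
  (forall pl, pl \in ag_planes -> exists a b : 'I_8,
     [/\ (a : nat) \in plane_pts pl, (b : nat) \in plane_pts pl, a != b & key a = key b]) ->
  (forall x, #|[set y | key y == key x]| <= 3) ->
  #|key @: setT| <= 3.
Proof.
move=> planeP fibreP; pose l := [seq (first_rep (inord i) : nat) | i <- iota 0 8].
have nth_l (a : 'I_8) : nth 0 l a = first_rep a.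
  by rewrite (nth_map 0) ?size_iota // nth_iota // add0n inord_val.
have count_l (p : nat -> nat -> bool) :
    count (fun i => p i (nth 0 l i)) (iota 0 8) = #|[set x : 'I_8 | p x (first_rep x)]|.
  rewrite cardsE cardE /enum_mem size_filter -enumT -val_enum_ord count_map.
  by apply: eq_count => x; rewrite /= nth_l.
have l_bounded : l \in bounded_seqs 8.
  apply: bounded_seqsP; first by rewrite size_map size_iota.
  move=> j lt_j8; have := nth_l (Ordinal lt_j8); rewrite /= => ->.
  by have [_ min_r] := first_repP (Ordinal lt_j8); exact: (min_r _ erefl).
have /implyP/(_ _)/implyP := allP bounded_seqs_colour_check l l_bounded.
rewrite /fixpoints_le3 (count_l (fun x c => c == x)) card_colours_eq_reps.
apply.
- apply/allP => pl /planeP[a [b [aP bP neq_ab key_ab]]].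
  apply/hasP; exists (a : nat) => //; apply/hasP; exists (b : nat) => //.
  by rewrite neq_ab !nth_l /= -[_ == _]/(first_rep a == first_rep b) eq_first_rep key_ab.
- apply/allP => v _; rewrite (count_l (fun _ c => c == v)).
  have [x0 /eqP rep_x0|no_rep] := pickP (fun x : 'I_8 => (first_rep x : nat) == v).
    apply: leq_trans (fibreP x0); apply/eq_leq/eq_card => y.
    by rewrite !inE -rep_x0 -[_ == _]/(first_rep y == first_rep x0) eq_first_rep.
  by rewrite eq_card0 // => y; rewrite inE no_rep.
Qed.
End AGColouring.



Section Construction.
Variables k t : nat.
Hypothesis t_gt0 : 0 < t.

Definition npts := (8 * k + t).+1.
Definition ncols := 4 * k + t.

(* Point [i] is point [i %% 8] of the copy [i %/ 8] of AG(3,2) when [i < 8k],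
   a coloop when [8k <= i < 8k + t], and the last point [8k + t] is the sum of
   point 0 of every copy and of all coloops. Column [j < 4k] is bit [j %% 4]
   of copy [j %/ 4]. *)
Definition entry (i j : nat) : bool :=
  if i < 8 * k then [&& j < 4 * k, j %/ 4 == i %/ 8 & ag_bit (i %% 8) (j %% 4)]
  else if i < 8 * k + t then j == 4 * k + (i - 8 * k)
  else ((j < 4 * k) && (j %% 4 == 0)) || (4 * k <= j < 4 * k + t).

Definition M : 'I_npts -> 'rV['F_2]_ncols := bitrow ncols (fun (i : 'I_npts) j => entry i j).

Definition in_pick (sel : nat -> seq nat) (coloops last : bool) (i : nat) : bool :=
  if i < 8 * k then i %% 8 \in sel (i %/ 8) else if i < 8 * k + t then coloops else last.

Definition pick_set sel coloops last : {set 'I_npts} :=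
  [set i : 'I_npts | in_pick sel coloops last i].

Lemma entry_copy i j : i < 8 * k ->
  entry i j = [&& j < 4 * k, j %/ 4 == i %/ 8 & ag_bit (i %% 8) (j %% 4)].
Proof. by rewrite /entry => ->. Qed.

Lemma entry_coloop i j : 8 * k <= i < 8 * k + t -> entry i j = (j == 4 * k + (i - 8 * k)).
Proof. by case/andP=> ge_i lt_i; rewrite /entry ltnNge ge_i lt_i. Qed.

Lemma entry_last j :
  entry (8 * k + t) j = ((j < 4 * k) && (j %% 4 == 0)) || (4 * k <= j < 4 * k + t).
Proof. by rewrite /entry ltnNge leq_addr ltnn. Qed.

Lemma in_pick_copy sel c l i : i < 8 * k -> in_pick sel c l i = (i %% 8 \in sel (i %/ 8)).
Proof. by rewrite /in_pick => ->. Qed.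

Lemma in_pick_coloop sel c l i : 8 * k <= i < 8 * k + t -> in_pick sel c l i = c.
Proof. by case/andP=> ge_i lt_i; rewrite /in_pick ltnNge ge_i lt_i. Qed.

Lemma in_pick_last sel c l : in_pick sel c l (8 * k + t) = l.
Proof. by rewrite /in_pick ltnNge leq_addr ltnn. Qed.

Lemma count_points (p : pred nat) :
  count p (iota 0 npts) = count p (iota 0 (8 * k)) + count p (iota (8 * k) t) + p (8 * k + t).
Proof. by rewrite /npts -addn1 iotaD count_cat iotaD count_cat /= !add0n addn0. Qed.

Lemma count_copy g (p : pred nat) : g < k ->
  (forall i, i < 8 * k -> p i -> i %/ 8 = g) ->
  count p (iota 0 (8 * k)) = count (fun x => p (8 * g + x)) (iota 0 8).
Proof.
move=> lt_gk p_g.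
have count0 m n : m + n <= 8 * k -> (forall i, m <= i < m + n -> i %/ 8 != g) ->
    count p (iota m n) = 0.
  move=> le_mn not_g; apply/eqP; rewrite -leqn0 leqNgt -has_count; apply/hasPn => i.
  rewrite mem_iota => range_i; apply: contraNN (not_g i range_i) => p_i.
  by apply/eqP/p_g; first lia.
have -> : 8 * k = 8 * g + (8 + 8 * (k - g.+1)) by lia.
rewrite iotaD count_cat add0n iotaD count_cat -{2}[8 * g]addn0 iotaDl count_map.
rewrite !count0 ?add0n ?addn0 //; try move=> i; lia.
Qed.

Lemma card_column sel c l (j : nat) :
  #|[set e in pick_set sel c l | entry e j]| =
  count (fun i => in_pick sel c l i && entry i j) (iota 0 npts).
Proof. by rewrite -card_ord_pred; apply: eq_card => i; rewrite !inE. Qed.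

Lemma column_copy sel c l j : j < 4 * k ->
  count (fun i => in_pick sel c l i && entry i j) (iota 0 npts) =
  count (fun x => (x \in sel (j %/ 4)) && ag_bit x (j %% 4)) (iota 0 8) + (l && (j %% 4 == 0)).
Proof.
move=> lt_j; rewrite count_points (@count_copy (j %/ 4)); first 1 last.
- by lia.
- by move=> i lt_i /andP[_]; rewrite entry_copy // => /and3P[_ /eqP]; lia.
rewrite (@eq_in_count _ _ pred0 (iota (8 * k) t)) ?count_pred0 ?addn0; last first.
  by move=> i; rewrite mem_iota /= => range_i; rewrite entry_coloop //; apply/negbTE/andP; lia.
rewrite entry_last lt_j in_pick_last andTb [4 * k <= j]leqNgt lt_j orbF.
congr (_ + _).
apply: eq_in_count => x; rewrite mem_iota add0n /= => lt_x8.
have lt_i : 8 * (j %/ 4) + x < 8 * k by lia.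
rewrite in_pick_copy // entry_copy // lt_j.
have -> : (8 * (j %/ 4) + x) %/ 8 = j %/ 4 by lia.
have -> : (8 * (j %/ 4) + x) %% 8 = x by lia.
by rewrite eqxx.
Qed.

Lemma column_coloop sel c l j : 4 * k <= j < 4 * k + t ->
  count (fun i => in_pick sel c l i && entry i j) (iota 0 npts) = c + l.
Proof.
move=> range_j; rewrite count_points entry_last in_pick_last range_j orbT andbT.
rewrite (@eq_in_count _ _ pred0 (iota 0 (8 * k))) ?count_pred0 ?add0n; last first.
  move=> i; rewrite mem_iota => /andP[_ lt_i] /=; rewrite entry_copy // ltnNge.
  by case/andP: range_j => -> _; rewrite andbF.
congr (_ + _).
rewrite (@eq_in_count _ _ (fun i => c && (i == 8 * k + (j - 4 * k)))); last first.
  move=> i; rewrite mem_iota => range_i /=; rewrite in_pick_coloop // entry_coloop //.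
  by congr (c && _); apply/eqP/eqP; lia.
case: c; last by rewrite count_pred0.
by rewrite count_uniq_mem ?iota_uniq // mem_iota; apply/eqP; lia.
Qed.

Lemma pick_set_sum0 sel c :
  (forall g j, g < k -> j < 4 -> bit_parity (sel g) j = c && (j == 0)) ->
  (\sum_(e in pick_set sel c c) M e = 0)%R.
Proof.
move=> parity_sel; apply: sum_bitrow_eq0 => j; rewrite card_column.
have [lt_j|ge_j] := ltnP j (4 * k).
  rewrite column_copy // oddD.
  by have := parity_sel (j %/ 4) (j %% 4); rewrite /bit_parity => -> //; lia.
rewrite column_coloop; first by case: (c).
by have := ltn_ord j; rewrite /ncols => lt_j; apply/andP.
Qed.

Definition pivot_col (sel : nat -> seq (nat * nat)) (i : nat) : nat :=
  if i < 8 * k then 4 * (i %/ 8) + pivot_of (sel (i %/ 8)) (i %% 8)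
  else if i < 8 * k + t then 4 * k + (i - 8 * k) else 4 * k.

Definition pivot_rank (sel : nat -> seq (nat * nat)) (i : nat) : nat :=
  if i < 8 * k then (index (i %% 8) (unzip1 (sel (i %/ 8)))).+1 else 0.

Section PivotedPick.
Variables (sel : nat -> seq (nat * nat)) (c l : bool).
Hypotheses (pivoted_sel : forall g, g < k -> pivoted (sel g)) (not_cl : ~~ (c && l)).

Let in_S := in_pick (fun g => unzip1 (sel g)) c l.

Lemma pivot_colP i : i < npts -> in_S i -> pivot_col sel i < ncols /\ entry i (pivot_col sel i).
Proof.
rewrite /in_S /pivot_col /ncols /npts ltnS => le_i.
have [lt_i|ge_i] := ltnP i (8 * k).
  have lt_gk : i %/ 8 < k by lia.
  rewrite in_pick_copy // => /(pivotedP (pivoted_sel lt_gk)) [_ lt_p4 bit_p _].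
  split; first lia.
  rewrite entry_copy //; apply/and3P; split; [lia | apply/eqP; lia |].
  set p := pivot_of _ _.
  by have -> : (4 * (i %/ 8) + p) %% 4 = p by lia.
have [lt_i'|ge_i'] := ltnP i (8 * k + t).
  by rewrite entry_coloop ?eqxx ?ge_i //; split; lia.
have -> : i = 8 * k + t by lia.
by rewrite entry_last leqnn /=; split; lia.
Qed.

Lemma pivot_col_extra i i' : 8 * k <= i -> i < npts -> i' < npts -> in_S i -> in_S i' ->
  i' != i -> ~~ entry i' (pivot_col sel i).
Proof.
rewrite /pivot_col /npts !ltnS ltnNge => ge_i le_i le_i' in_i in_i' ne_i'i; rewrite ge_i /=.
have [lt_i'|ge_i'] := ltnP i' (8 * k); first by rewrite entry_copy //; case: ifP; lia.
have not_both j j' : j < 8 * k + t -> j' = 8 * k + t -> 8 * k <= j -> in_S j -> ~~ in_S j'.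
  move=> lt_j -> ge_j; rewrite /in_S in_pick_coloop ?ge_j // in_pick_last => c_true.
  by move: not_cl; rewrite c_true.
have [lt_ti|ge_ti] := ltnP i (8 * k + t); have [lt_ti'|ge_ti'] := ltnP i' (8 * k + t).
- rewrite entry_coloop ?ge_i' ?lt_ti' //.
  by apply: contra ne_i'i => /eqP eq_col; apply/eqP; lia.
- have last_i' : i' = 8 * k + t by lia.
  by move: in_i'; rewrite (negbTE (not_both _ _ lt_ti last_i' ge_i in_i)).
- have last_i : i = 8 * k + t by lia.
  by move: in_i; rewrite (negbTE (not_both _ _ lt_ti' last_i ge_i' in_i')).
- by case/eqP: ne_i'i; lia.
Qed.

Lemma pivot_rankP i i' : i < npts -> i' < npts -> in_S i -> in_S i' -> i' != i ->
  entry i' (pivot_col sel i) -> pivot_rank sel i' < pivot_rank sel i.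
Proof.
move=> lt_i lt_i' in_i in_i' ne_i'i.
have [lt_ik|ge_ik] := ltnP i (8 * k); last by rewrite (negbTE (pivot_col_extra _ _ _ _ _ _)).
rewrite /pivot_rank /pivot_col lt_ik.
have [lt_i'k|//] := ltnP i' (8 * k).
have lt_gk : i %/ 8 < k by lia.
move: in_i in_i'; rewrite /in_S !in_pick_copy //.
move=> /(pivotedP (pivoted_sel lt_gk)) [_ lt_p4 _ earlier] in_i'.
rewrite entry_copy // => /and3P[_ /eqP same_copy bit_i'].
have {}same_copy : i' %/ 8 = i %/ 8 by move: same_copy; lia.
have {bit_i'} : ag_bit (i' %% 8) (pivot_of (sel (i %/ 8)) (i %% 8)).
  by move: bit_i'; congr (ag_bit _ _); lia.
move/(earlier (i' %% 8)); rewrite ltnS same_copy; apply; first by rewrite -same_copy.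
by apply: contra ne_i'i => /eqP eq_mod; apply/eqP; lia.
Qed.

Lemma pick_set_indep : mindep M (pick_set (fun g => unzip1 (sel g)) c l).
Proof.
apply: (@mindep_bitrow _ ncols (fun (i : 'I_npts) j => entry i j) _
  (fun e => pivot_col sel e) (fun e => pivot_rank sel e)) => [e|e e'];
  rewrite !inE; [exact: pivot_colP | exact: pivot_rankP].
Qed.

End PivotedPick.

Lemma leq_last (i : 'I_npts) : i <= 8 * k + t.
Proof. exact: ltn_ord i. Qed.

Definition copy_pt (g x : nat) : 'I_npts := inord (8 * g + x).

Lemma copy_ptK g x : g < k -> x < 8 -> copy_pt g x = 8 * g + x :> nat.
Proof. by move=> lt_gk lt_x8; rewrite inordK //; rewrite /npts; lia. Qed.

Lemma copy_ptE (i : 'I_npts) : i < 8 * k -> i = copy_pt (i %/ 8) (i %% 8).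
Proof. by move=> lt_i; apply: ord_inj; rewrite copy_ptK; lia. Qed.

Lemma in_pick_copy_pt sel c l g x : g < k -> x < 8 ->
  in_pick sel c l (copy_pt g x) = (x \in sel g).
Proof.
move=> lt_gk lt_x8; rewrite copy_ptK // in_pick_copy; last lia.
have -> : (8 * g + x) %/ 8 = g by lia.
by have -> : (8 * g + x) %% 8 = x by lia.
Qed.

Definition plane_set g pl := pick_set (fun h => if h == g then plane_pts pl else [::]) false false.

Lemma plane_set_circuit g pl : g < k -> pl \in ag_planes -> mcircuit M (plane_set g pl).
Proof.
move=> lt_gk pl_in; have /and4P[piv_pl lt_a8 a_notin even_pl] := allP ag_planes_ok pl pl_in.
apply: (mcircuit_sum0 (e0 := copy_pt g pl.1)).
- apply: pick_set_sum0 => h j lt_hk lt_j4; case: eqP => _.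
    by apply/negbTE/(allP even_pl); rewrite mem_iota.
  by rewrite /bit_parity (@eq_count _ _ pred0) ?count_pred0.
- by rewrite inE in_pick_copy_pt // eqxx mem_head.
have -> : plane_set g pl :\ copy_pt g pl.1 =
    pick_set (fun h => unzip1 (if h == g then pl.2 else [::])) false false.
  apply/setP => i; rewrite !inE.
  have [lt_i|ge_i] := ltnP i (8 * k).
    2: by rewrite /in_pick ltnNge ge_i /=; case: ifP; rewrite andbF.
  rewrite !in_pick_copy // -(inj_eq (@ord_inj _)) copy_ptK //.
  have [<-|] := eqVneq (i %/ 8) g; last by rewrite andbF.
  rewrite /plane_pts in_cons; have [eq_a|ne_a] := eqVneq (i %% 8) pl.1.
    by rewrite eq_a (negbTE a_notin) /= andbT -eq_a mulnC -divn_eq eqxx.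
  by rewrite /= mulnC {1}(divn_eq i 8) (inj_eq (@addnI _)) ne_a.
apply: pick_set_indep => // h _; case: eqP => // _.
Qed.

Lemma ag_to_baseP s : s < 8 ->
  [/\ pivoted (ag_to_base s), s \in unzip1 (ag_to_base s) &
      forall j, j < 4 -> bit_parity (unzip1 (ag_to_base s)) j = (j == 0)].
Proof.
move=> lt_s8; have s_in : s \in iota 0 8 by rewrite mem_iota.
have /and3P[piv_s s_base /allP parity_s] := allP ag_to_base_ok s s_in.
by split=> // j lt_j4; apply/eqP/parity_s; rewrite mem_iota.
Qed.

Definition base_circuit (s : nat -> nat) :=
  pick_set (fun h => unzip1 (ag_to_base (s h))) true true.

Lemma base_circuitP s : (forall h, h < k -> s h < 8) -> mcircuit M (base_circuit s).
Proof.
move=> lt_s8; apply: (mcircuit_sum0 (e0 := ord_max)).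
- apply: pick_set_sum0 => h j lt_hk lt_j4.
  by have [_ _ ->] := ag_to_baseP (lt_s8 h lt_hk).
- by rewrite inE in_pick_last.
have -> : base_circuit s :\ ord_max = pick_set (fun h => unzip1 (ag_to_base (s h))) true false.
  apply/setP => i; rewrite !inE -(inj_eq (@ord_inj _)).
  have [lt_i|ge_i] := ltnP i (8 * k + t).
    by rewrite (ltn_eqF lt_i) /in_pick lt_i; case: ifP.
  have -> : (i : nat) = 8 * k + t by have := leq_last i; lia.
  by rewrite eqxx !in_pick_last.
by apply: pick_set_indep => // h lt_hk; have [] := ag_to_baseP (lt_s8 h lt_hk).
Qed.

Lemma M_rank : mrank_is M ncols.
Proof.
have /and4P[piv_unit _ _ _] := ag_bases_ok.
split=> [|S]; last exact: mindep_card.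
exists (pick_set (fun=> unzip1 ag_unit_basis) true false); split; first exact: pick_set_indep.
rewrite card_ord_pred count_points in_pick_last addn0.
rewrite (@eq_in_count _ _ (fun i => i %% 8 \in unzip1 ag_unit_basis)); last first.
  by move=> i; rewrite mem_iota /= => lt_i; rewrite in_pick_copy.
rewrite (@eq_in_count _ _ predT (iota _ t)) ?count_predT ?size_iota; last first.
  by move=> i; rewrite mem_iota => range_i; rewrite in_pick_coloop.
by rewrite count_iota_mod /ncols mulnC.
Qed.

Lemma M_coverable : mcoverable M 2.
Proof.
have /and4P[_ piv1 piv2 /allP cover12] := ag_bases_ok.
set S1 := pick_set (fun=> unzip1 ag_basis1) true false.
set S2 := pick_set (fun=> unzip1 ag_basis2) false true.
exists [:: S1; S2]; split=> //; split.
  by move=> S; rewrite !inE => /orP[] /eqP->; apply: pick_set_indep.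
move=> e; have [lt_e|ge_e] := ltnP e (8 * k).
  have /orP[in1|in2] : (e %% 8 \in unzip1 ag_basis1) || (e %% 8 \in unzip1 ag_basis2).
    by apply: cover12; rewrite mem_iota ltn_mod.
  by exists S1; rewrite ?mem_head // inE in_pick_copy.
  by exists S2; rewrite ?inE ?eqxx ?orbT // in_pick_copy.
have [lt_e'|ge_e'] := ltnP e (8 * k + t).
  by exists S1; rewrite ?mem_head // inE in_pick_coloop ?ge_e.
exists S2; first by rewrite !inE eqxx orbT.
by rewrite inE (_ : (e : nat) = 8 * k + t) ?in_pick_last //; have := leq_last e; lia.
Qed.

Lemma M_connected : mconnected M.
Proof.
move=> x y _.
have [/and3P[lt_x lt_y /eqP same_copy]|not_same] :=
  boolP [&& x < 8 * k, y < 8 * k & x %/ 8 == y %/ 8].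
  pose a : 'I_8 := Ordinal (ltn_pmod x (isT : 0 < 8)).
  pose b : 'I_8 := Ordinal (ltn_pmod y (isT : 0 < 8)).
  have [pl_in [a_in b_in]] := ag_plane_throughP a b.
  exists (plane_set (x %/ 8) (ag_plane_through a b)); split.
    by apply: plane_set_circuit; first lia.
  by rewrite !inE !in_pick_copy // -same_copy eqxx.
pose s h := if (x < 8 * k) && (h == x %/ 8) then x %% 8
            else if (y < 8 * k) && (h == y %/ 8) then y %% 8 else 0.
have lt_s8 h : s h < 8 by rewrite /s; case: ifP => _; [|case: ifP => _]; rewrite ?ltn_mod.
have s_in h : s h \in unzip1 (ag_to_base (s h)) by have [] := ag_to_baseP (lt_s8 h).
exists (base_circuit s); split; first exact: base_circuitP.
split; rewrite inE /in_pick.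
  by case: ifP => lt_x; [rewrite -{1}[x %% 8](_ : s (x %/ 8) = _) // /s lt_x eqxx|case: ifP].
case: ifP => lt_y; last by case: ifP.
rewrite -{1}[y %% 8](_ : s (y %/ 8) = _) // /s lt_y eqxx.
by case: ifP => // /andP[lt_x /eqP same]; case/negP: not_same; rewrite lt_x lt_y same eqxx.
Qed.

Definition extra_pts : {set 'I_npts} := [set i : 'I_npts | 8 * k <= i].

Lemma card_extra_pts : #|extra_pts| = t.+1.
Proof.
rewrite card_ord_pred count_points leq_addr addn1; congr _.+1.
rewrite (@eq_in_count _ _ pred0 (iota 0 _)) ?count_pred0; last first.
  by move=> i; rewrite mem_iota add0n => /andP[_ lt_i] /=; rewrite leqNgt lt_i.
rewrite (@eq_in_count _ _ predT (iota _ t)) ?count_predT ?size_iota //.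
by move=> i; rewrite mem_iota => /andP[].
Qed.

Lemma in_plane_set g pl u : g < k -> u \in plane_set g pl ->
  exists2 a : 'I_8, u = copy_pt g a & (a : nat) \in plane_pts pl.
Proof.
move=> lt_gk; rewrite inE /in_pick; case: ifP => [lt_u|_]; last by case: ifP.
case: eqP => [same_g a_in|//]; exists (Ordinal (ltn_pmod u (isT : 0 < 8))) => //.
by rewrite -same_g; apply: copy_ptE.
Qed.

Section ColourBound.
Variable P : {set {set 'I_npts}}.
Hypotheses (partP : partition P [set: 'I_npts]) (rfP : rainbow_circuit_free M P).
Hypothesis le3P : forall B, B \in P -> #|B| <= 3.

Definition copy_colours (g : nat) := [set pblock P (copy_pt g x) | x : 'I_8 in [set: 'I_8]].

Lemma card_copy_colours g : g < k -> #|copy_colours g| <= 3.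
Proof.
move=> lt_gk; apply: card_colours_AG_le3 => [pl pl_in|x].
  have [u [v [u_in v_in ne_uv same_uv]]] :=
    rainbow_circuit_free_pblock partP rfP (plane_set_circuit lt_gk pl_in).
  have [a eq_u a_in] := in_plane_set lt_gk u_in; have [b eq_v b_in] := in_plane_set lt_gk v_in.
  subst u v.
  by exists a, b; split=> //; apply: contraNneq ne_uv => ->.
have cover_all z : z \in cover P by rewrite (cover_partition partP) inE.
apply: leq_trans (le3P (pblock_mem (cover_all (copy_pt g x)))).
have copy_inj : injective (copy_pt g : 'I_8 -> 'I_npts).
  by move=> y z /(congr1 val); rewrite /= !copy_ptK // => /addnI /val_inj.
rewrite -(card_imset _ copy_inj); apply/subset_leq_card/subsetP => _ /imsetP[y + ->].
by rewrite inE => /eqP <-; rewrite mem_pblock.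
Qed.

Lemma pblock_in_copy_colours (i : 'I_npts) : i < 8 * k -> pblock P i \in copy_colours (i %/ 8).
Proof.
move=> lt_i; rewrite [in pblock P i](copy_ptE lt_i).
by apply/imsetP; exists (Ordinal (ltn_pmod i (isT : 0 < 8))).
Qed.

Lemma card_colours_le (D : {set 'I_npts}) :
  #|pblock P @: D| <= #|\bigcup_(g < k) copy_colours g| + #|D :&: extra_pts|.
Proof.
set copies := \bigcup_(g < k) copy_colours g.
have sub_colours : pblock P @: D \subset copies :|: pblock P @: (D :&: extra_pts).
  apply/subsetP => _ /imsetP[i iD ->]; rewrite inE.
  have [lt_i|ge_i] := ltnP i (8 * k); last by rewrite imset_f ?orbT // !inE iD ge_i.
  have lt_g : i %/ 8 < k by lia.
  by apply/orP; left; apply/bigcupP; exists (Ordinal lt_g); last exact: pblock_in_copy_colours.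
apply: leq_trans (subset_leq_card sub_colours) _.
by apply: leq_trans (leq_card_setU _ _).1 _; rewrite leq_add2l leq_imset_card.
Qed.

Lemma card_copies : \sum_(g < k) #|copy_colours g| <= 3 * k.
Proof.
apply: (@leq_trans (\sum_(g < k) 3)).
  by apply: leq_sum => g _; apply: card_copy_colours.
by rewrite sum_nat_const card_ord mulnC.
Qed.

Lemma colour_bound : #|P| <= 3 * k + t.
Proof.
rewrite (partition_pblock_imset partP).
have drop_extra (w w' : 'I_npts) : 8 * k <= w -> w' != w -> pblock P w = pblock P w' ->
    #|pblock P @: setT| <= 3 * k + t.
  move=> ge_w ne_w'w same_ww'; rewrite (imset_setD1_collision (in_setT w') ne_w'w same_ww').
  apply: leq_trans (card_colours_le _) _.
  apply: leq_add; first exact: leq_trans (leq_card_bigcup _ _) card_copies.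
  have -> : (setT :\ w) :&: extra_pts = extra_pts :\ w by apply/setP => i; rewrite !inE andbT.
  by have := cardsD1 w extra_pts; rewrite card_extra_pts inE ge_w add1n => -[<-].
have [u [v [u_in v_in ne_uv same_uv]]] :=
  rainbow_circuit_free_pblock partP rfP (base_circuitP (s := fun=> 0) (fun _ _ => isT)).
have [ge_u|lt_u] := leqP (8 * k) u; first by apply: drop_extra ge_u _ same_uv; rewrite eq_sym.
have [ge_v|lt_v] := leqP (8 * k) v; first exact: drop_extra ge_v ne_uv (esym same_uv).
have base_pt w : w \in base_circuit (fun=> 0) -> w < 8 * k -> w %% 8 = 0.
  by move=> + lt_w; rewrite inE in_pick_copy // inE => /eqP.
have lt_gu : u %/ 8 < k by lia.
have lt_gv : v %/ 8 < k by lia.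
have ne_g : Ordinal lt_gu != Ordinal lt_gv.
  apply: contraNneq ne_uv => /(congr1 val) /= same_g; apply/eqP/ord_inj.
  by rewrite (divn_eq u 8) (divn_eq v 8) same_g !base_pt.
have meet_g : copy_colours (Ordinal lt_gu) :&: copy_colours (Ordinal lt_gv) != set0.
  by apply/set0Pn; exists (pblock P u); rewrite inE {2}same_uv !pblock_in_copy_colours.
have lt_copies : #|\bigcup_(g < k) copy_colours g| < 3 * k.
  apply: leq_trans card_copies.
  exact: (ltn_card_bigcup (F := fun g : 'I_k => copy_colours g) ne_g meet_g).
apply: leq_trans (card_colours_le setT) _.
by rewrite setTI card_extra_pts addnS -addSn leq_add2r.
Qed.

End ColourBound.
End Construction.

Theorem corollary8 (r : nat) : (0 < r)%N ->
  exists (n m : nat) (A : 'I_n -> 'rV['F_2]_m),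
    mrank_is A r /\ mcoverable A 2 /\ mconnected A /\
    forall P : {set {set 'I_n}},
      partition P [set: 'I_n] ->
      rainbow_circuit_free A P ->
      (forall B, B \in P -> (#|B| <= 3)%N) ->
      (#|P| <= (6 * r + 6) %/ 7)%N.
Proof.
move=> r_gt0.
have [k [t [t_gt0 le_t4 def_r]]] : exists k t, [/\ 0 < t, t <= 4 & 4 * k + t = r].
  by exists ((r - 1) %/ 4), (r - 4 * ((r - 1) %/ 4)); split; lia.
exists (npts k t), (ncols k t), (@M k t); rewrite -def_r.
split; first exact: M_rank.
split; first exact: M_coverable.
split; first exact: M_connected.
move=> P partP rfP le3P; apply: leq_trans (colour_bound t_gt0 partP rfP le3P) _.
by rewrite leq_divRL //; lia.
Qed.
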